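(* Let $\Gamma$ be a graph whose switching class is a non-trivial regular two-graph. Then $\Gamma$ is not bipartite.
   Context: Graphs are finite, simple and undirected. For a graph $\Gamma$ with adjacency matrix $A$ on $v$ vertices, the Seidel matrix is $S(\Gamma)=J-I-2A$. For a partition $\Pi=\{U,W\}$ of the vertex set (one part possibly empty), Seidel switching gives the graph $\Gamma^\Pi$ on the same vertices in which two distinct vertices are adjacent iff either they are adjacent in $\Gamma$ and lie in the same part, or they are non-adjacent in $\Gamma$ and lie in different parts. The switching class $[\Gamma]$ is the set of all such $\Gamma^\Pi$. It is a regular two-graph if $S(\Gamma)$ has exactly two distinct eigenvalues; it is trivial if it contains a complete graph or an edgeless graph, and non-trivial otherwise. *)

From HB Require Import structures.
From mathcomp Require Import all_boot all_order all_algebra all_field.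
Set Implicit Arguments. Unset Strict Implicit. Unset Printing Implicit Defensive.
Import Order.TTheory GRing.Theory Num.Theory.
Local Open Scope ring_scope.

Definition simple_graph (v : nat) (e : rel 'I_v) : Prop :=
  (forall x y, e x y = e y x) /\ (forall x, ~~ e x x).

(* Seidel matrix S = J - I - 2A, over the algebraic complex numbers. *)
Definition seidel (v : nat) (e : rel 'I_v) : 'M[algC]_v :=
  \matrix_(i, j) (if i == j then 0 else if e i j then -1 else 1).

Definition switch (v : nat) (e : rel 'I_v) (U : {set 'I_v}) : rel 'I_v :=
  fun x y => (x != y) &&
    (if (x \in U) == (y \in U) then e x y else ~~ e x y).

Definition regular_two_graph (v : nat) (e : rel 'I_v) : Prop :=
  exists a b : algC, a != b /\
    forall c : algC, eigenvalue (seidel e) c <-> (c = a \/ c = b).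

Definition complete_graph (v : nat) (e : rel 'I_v) : Prop :=
  forall x y, x != y -> e x y.

Definition edgeless_graph (v : nat) (e : rel 'I_v) : Prop :=
  forall x y, ~~ e x y.

Definition trivial_switching_class (v : nat) (e : rel 'I_v) : Prop :=
  exists U : {set 'I_v},
    complete_graph (switch e U) \/ edgeless_graph (switch e U).

Definition bipartite (v : nat) (e : rel 'I_v) : Prop :=
  exists f : 'I_v -> bool, forall x y, e x y -> f x != f y.

From mathcomp Require Import all_boot all_order all_algebra all_field.
From mathcomp Require Import zify ring.
Set Implicit Arguments. Unset Strict Implicit. Unset Printing Implicit Defensive.
Import Order.TTheory GRing.Theory Num.Theory Num.Def.
Local Open Scope ring_scope.

(* Let [s] be the Seidel matrix of the graph and [p] the sum of its two
   eigenvalues.  As [s] is normal, [s^2 - p s] is scalar: for every pair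
   i <> j the v - 2 triple products s_ij s_jk s_ki (k <> i, j) sum to [p].
   These products lie in {1, -1}, so they are all equal, which makes the
   switching class trivial, exactly when p = v - 2 or p = 2 - v.
   If the graph is bipartite then s = 1 between distinct vertices of the same
   part.  Comparing row sums in the off-diagonal identity s^2 = p s shows that
   for p <> -2 the block of [s] between the two parts has rank one; the rows of
   the larger part then agree up to sign, which forces p = +-(v - 2).  For
   p = -2 the rows of the larger part are pairwise opposite, so both parts
   have two vertices and p = 2 - v again. *)

Lemma signs_mul_eq_of_add_eq (a b c d : int) :
  a = 1 \/ a = -1 -> b = 1 \/ b = -1 -> c = 1 \/ c = -1 -> d = 1 \/ d = -1 ->
  a + d = c + b -> a * b = c * d.
Proof. by do 4! case=> ->; lia. Qed.

Lemma sign_pigeonhole (a1 a2 a3 : int) :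
  a1 = 1 \/ a1 = -1 -> a2 = 1 \/ a2 = -1 -> a3 = 1 \/ a3 = -1 ->
  [\/ a1 * a2 = 1, a1 * a3 = 1 | a2 * a3 = 1].
Proof. by do 3! case=> ->; rewrite ?mulN1r ?opprK; constructor. Qed.

Lemma sum_signs_const (I : finType) (P : pred I) (t : I -> int) (c : int) :
  c = 1 \/ c = -1 -> (forall k, P k -> t k = 1 \/ t k = -1) ->
  \sum_(k | P k) t k = c * \sum_(k | P k) 1 -> forall k, P k -> t k = c.
Proof.
move=> c_sign t_sign t_sum k Pk.
have cc : c * c = 1 by case: c_sign => ->.
have gap0 : \sum_(k | P k) (1 - c * t k) = 0.
  by rewrite sumrB -mulr_sumr t_sum mulrA cc mul1r subrr.
have gap_ge0 i : P i -> 0 <= 1 - c * t i.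
  by move=> Pi; case: c_sign (t_sign i Pi) => -> [] ->.
move/eqP: (psumr_eq0P gap_ge0 gap0 Pk); rewrite subr_eq0 => /eqP ctk.
by rewrite -[t k]mul1r -cc -mulrA -ctk mulr1.
Qed.

Section RegularSigns.

Variables (v : nat) (s : 'I_v -> 'I_v -> int) (p : int).
Hypothesis s_diag : forall i, s i i = 0.
Hypothesis s_sym : forall i j, s i j = s j i.
Hypothesis s_sign : forall i j, i != j -> s i j = 1 \/ s i j = -1.
Hypothesis s_regular :
  forall i j, i != j -> \sum_k s i k * s k j = p * s i j.

Lemma sign_sqr i j : i != j -> s i j * s i j = 1.
Proof. by case/s_sign => ->. Qed.

Lemma triple_sign i j k : i != j -> j != k -> k != i ->
  s i j * s j k * s k i = 1 \/ s i j * s j k * s k i = -1.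
Proof.
move=> /s_sign + /s_sign + /s_sign.
by do 3! case=> ->; rewrite ?mulN1r ?mulr1 ?opprK; auto.
Qed.

Lemma triple_sum i j : i != j ->
  \sum_(k | (k != i) && (k != j)) s i j * s j k * s k i = p.
Proof.
move=> ij; have := congr1 (fun z => z * s i j) (s_regular ij).
rewrite mulr_suml -mulrA sign_sqr // mulr1 => <-.
rewrite [RHS](bigD1 i) //= [X in _ = _ + X](bigD1 j) /=; last by rewrite eq_sym.
rewrite !s_diag !(mulr0, mul0r) !add0r; apply: eq_bigr => k _.
by rewrite (s_sym j k) (s_sym k i); ring.
Qed.

Lemma count_pair_complement (i j : 'I_v) : i != j ->
  \sum_(k | (k != i) && (k != j)) 1 = v%:Z - 2.
Proof.
move=> ij; have : \sum_(k < v) (1 : int) = v%:Z by rewrite sumr_const card_ord natz.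
rewrite (bigD1 i) //= (bigD1 j) /=; last by rewrite eq_sym.
by move=> <-; ring.
Qed.

Lemma triples_constant (c : int) : c = 1 \/ c = -1 -> p = c * (v%:Z - 2) ->
  forall i j k, i != j -> j != k -> k != i -> s i j * s j k * s k i = c.
Proof.
move=> c_sign p_ext i j k ij jk ki.
have kij : (k != i) && (k != j) by rewrite ki eq_sym jk.
have signs l : (l != i) && (l != j) ->
    s i j * s j l * s l i = 1 \/ s i j * s j l * s l i = -1.
  by case/andP=> li lj; apply: triple_sign; rewrite // eq_sym.
have := triple_sum ij; rewrite p_ext -(count_pair_complement ij).
by move/(sum_signs_const c_sign signs); apply.
Qed.

Section Bipartition.

Variable f : 'I_v -> bool.
Hypothesis s_part : forall i j, i != j -> f i = f j -> s i j = 1.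

Let part b := [set k | f k == b].

Lemma part_neq b x y : x \in part b -> y \in part (~~ b) -> x != y.
Proof.
rewrite !inE => /eqP fx /eqP fy; apply/eqP => xy.
by move: fy; rewrite -xy fx; case: (b).
Qed.

Lemma card_parts b : #|part b|%:Z + #|part (~~ b)|%:Z = v%:Z.
Proof.
have -> : part (~~ b) = ~: part b by apply/setP => k; rewrite !inE; case: (f k); case: b.
by rewrite -PoszD cardsC card_ord.
Qed.

Lemma sum_parts b (F : 'I_v -> int) :
  \sum_k F k = \sum_(k in part b) F k + \sum_(k in part (~~ b)) F k.
Proof.
rewrite (bigID (mem (part b))) /=; congr (_ + _); apply: eq_bigl => k.
by rewrite !inE; case: (f k); case: b.
Qed.

Lemma sum_part_one b : \sum_(k in part b) 1 = #|part b|%:Z.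
Proof. by rewrite sumr_const natz. Qed.

Lemma sum_part_row b z (g : 'I_v -> int) : z \in part b ->
  \sum_(k in part b) s z k * g k = \sum_(k in part b) g k - g z.
Proof.
move=> zb; rewrite (bigD1 z) //= [in RHS](bigD1 z) //= s_diag mul0r add0r.
rewrite addrAC subrr add0r; apply: eq_bigr => k /andP[kb kz].
by rewrite s_part ?mul1r // 1?eq_sym //; move: zb kb; rewrite !inE => /eqP-> /eqP->.
Qed.

Lemma cross_sign b x k : x \in part b -> k \in part (~~ b) -> s x k = 1 \/ s x k = -1.
Proof. by move=> xb kb; apply: s_sign; apply: part_neq kb. Qed.

Definition cross_dot b x x' := \sum_(k in part (~~ b)) s x k * s x' k.

Lemma same_part_sum b x x' : x \in part b -> x' \in part b -> x != x' ->
  p = #|part b|%:Z - 2 + cross_dot b x x'.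
Proof.
move=> xb x'b xx'.
have fxx' : f x = f x' by move: xb x'b; rewrite !inE => /eqP-> /eqP->.
have := s_regular xx'; rewrite s_part // mulr1 (sum_parts b) sum_part_row // => <-.
congr (_ + _); last by apply: eq_bigr => k _; rewrite (s_sym k x').
under eq_bigr do rewrite s_sym -[s x' _]mulr1.
by rewrite sum_part_row // s_part // sum_part_one; ring.
Qed.

Lemma cross_dot_abs b x x' : x \in part b -> x' \in part b ->
  `|cross_dot b x x'| <= #|part (~~ b)|%:Z.
Proof.
move=> xb x'b; apply: le_trans (ler_norm_sum _ _ _) _.
rewrite -sum_part_one; apply: ler_sum => k kb.
by case: (cross_sign xb kb) => ->; case: (cross_sign x'b kb) => ->.
Qed.

Lemma sum_three_rows b x1 x2 x3 :
  x1 \in part b -> x2 \in part b -> x3 \in part b ->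
  0 <= 3 * #|part (~~ b)|%:Z +
       2 * (cross_dot b x1 x2 + cross_dot b x1 x3 + cross_dot b x2 x3).
Proof.
move=> x1b x2b x3b.
rewrite /cross_dot -sum_part_one -!big_split !mulr_sumr -big_split /=.
apply: sumr_ge0 => k kb.
by case: (cross_sign x1b kb) (cross_sign x2b kb) (cross_sign x3b kb)
  => [->|->] [->|->] [->|->].
Qed.

Definition cross_sum b x := \sum_(k in part (~~ b)) s x k.

Lemma cross_sum_pair b x y : x \in part b -> y \in part (~~ b) ->
  cross_sum b x + cross_sum (~~ b) y = (p + 2) * s x y.
Proof.
move=> xb yb; have := s_regular (part_neq xb yb).
rewrite (sum_parts b) sum_part_row // => reg.
have cross_y : \sum_(k in part b) s k y = cross_sum (~~ b) y.
  by rewrite /cross_sum negbK; apply: eq_bigr => k _; rewrite s_sym.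
have cross_x : \sum_(k in part (~~ b)) s x k * s k y = cross_sum b x - s x y.
  by under eq_bigr => k _ do rewrite mulrC s_sym; rewrite sum_part_row.
by rewrite -cross_y -[cross_sum b x](addrNK (s x y)) -cross_x mulrDl -reg; ring.
Qed.

Section ParameterNotMinusTwo.

Hypothesis p2 : p + 2 != 0.

(* By [cross_sum_pair], (p + 2) s_xy splits as a function of x plus a
   function of y. *)
Lemma cross_rows_proportional b x x' y y' :
  x \in part b -> x' \in part b -> y \in part (~~ b) -> y' \in part (~~ b) ->
  s x y * s x' y = s x y' * s x' y'.
Proof.
move=> xb x'b yb y'b; apply: signs_mul_eq_of_add_eq;
  [exact: cross_sign xb yb | exact: cross_sign x'b yb |
   exact: cross_sign xb y'b | exact: cross_sign x'b y'b |].
apply: (mulfI p2); rewrite mulrDr [RHS]mulrDr.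
rewrite -(cross_sum_pair xb yb) -(cross_sum_pair x'b y'b).
rewrite -(cross_sum_pair xb y'b) -(cross_sum_pair x'b yb).
by rewrite addrACA [RHS]addrACA [in RHS](addrC (cross_sum _ y')).
Qed.

Lemma same_part_sum_rank_one b x x' y :
  x \in part b -> x' \in part b -> x != x' -> y \in part (~~ b) ->
  p = #|part b|%:Z - 2 + #|part (~~ b)|%:Z * (s x y * s x' y).
Proof.
move=> xb x'b xx' yb; rewrite (same_part_sum xb x'b xx') -(sum_part_one (~~ b)) mulr_suml.
congr (_ + _); apply: eq_bigr => k kb.
by rewrite mul1r (cross_rows_proportional xb x'b yb kb).
Qed.

End ParameterNotMinusTwo.

Lemma extremal_of_p2_neq0 b : p + 2 != 0 -> (1 < #|part b|)%N ->
  p = v%:Z - 2 \/ p = 2 - v%:Z.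
Proof.
move=> p2 m2; have vmn := card_parts b.
have [x [x' [xb x'b xx']]] := card_gt1P m2.
have [n0|/card_gt0P [y yb]] := posnP #|part (~~ b)|.
  left; have := cross_dot_abs xb x'b; rewrite n0 normr_le0 => /eqP D0.
  by rewrite (same_part_sum xb x'b xx') D0; lia.
have rank_one z z' : z \in part b -> z' \in part b -> z != z' ->
    p = #|part b|%:Z - 2 + #|part (~~ b)|%:Z * (s z y * s z' y).
  by move=> zb z'b zz'; exact: (same_part_sum_rank_one p2 zb z'b zz' yb).
case: (ltnP 2 #|part b|) => [m3|m_le2].
  have [x1 [x2 [x3 [[x1b x2b x3b] [x12 x23 x31]]]]] := card_gt2P m3.
  rewrite eq_sym in x31; left.
  have equal_rows z z' : z \in part b -> z' \in part b -> z != z' ->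
      s z y * s z' y = 1 -> p = v%:Z - 2.
    by move=> zb z'b zz' prod1; rewrite (rank_one z z') // prod1 mulr1 -vmn; ring.
  case: (sign_pigeonhole (cross_sign x1b yb) (cross_sign x2b yb) (cross_sign x3b yb)).
  - exact: equal_rows x1b x2b x12.
  - exact: equal_rows x1b x3b x31.
  - exact: equal_rows x2b x3b x23.
have m2' : #|part b| = 2 by apply/eqP; rewrite eqn_leq m_le2.
have := rank_one _ _ xb x'b xx'; rewrite m2' -vmn m2'.
case: (cross_sign xb yb) (cross_sign x'b yb) => -> [] -> ->;
  [left | right | right | left]; ring.
Qed.

(* A pair in the larger part [b] has cross dot product -#|part b|, which is at
   least -#|part (~~ b)|; so the parts have equal size, and [sum_three_rows]
   leaves no room for a third vertex. *)
Lemma extremal_of_p2_eq0 b : p + 2 = 0 ->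
  (#|part (~~ b)| <= #|part b|)%N -> (1 < #|part b|)%N -> p = 2 - v%:Z.
Proof.
move=> p2 nm m2; have vmn := card_parts b.
have pair_dot z z' : z \in part b -> z' \in part b -> z != z' ->
    cross_dot b z z' = - #|part b|%:Z.
  by move=> zb z'b zz'; have := same_part_sum zb z'b zz'; lia.
have [x [x' [xb x'b xx']]] := card_gt1P m2.
have := cross_dot_abs xb x'b; rewrite pair_dot // normrN => mn.
case: (ltnP 2 #|part b|) => [m3|m_le2]; last by lia.
have [x1 [x2 [x3 [[x1b x2b x3b] [x12 x23 x31]]]]] := card_gt2P m3.
have := sum_three_rows x1b x2b x3b; rewrite !pair_dot // 1?eq_sym //.
by move: m3 mn nm; clear; lia.
Qed.

Lemma extremal_parameter : (3 <= v)%N ->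
  exists2 c : int, c = 1 \/ c = -1 & p = c * (v%:Z - 2).
Proof.
move=> v3; have [b nm] : exists b, (#|part (~~ b)| <= #|part b|)%N.
  case: (leqP #|part false| #|part true|) => h; first by exists true.
  by exists false; apply: ltnW.
have m2 : (1 < #|part b|)%N by have := card_parts b; lia.
have [p2|p2] := eqVneq (p + 2) 0.
  by exists (-1); [right | rewrite (extremal_of_p2_eq0 p2 nm m2); ring].
by case: (extremal_of_p2_neq0 p2 m2) => ->; [exists 1 | exists (-1)]; auto; ring.
Qed.

End Bipartition.

End RegularSigns.

Lemma diag_mx_subC (n : nat) (d : 'rV[algC]_n) (a : algC) :
  diag_mx d - a%:M = diag_mx (\row_k (d 0 k - a)).
Proof. by apply/matrixP => i j; rewrite !mxE mulrnBl. Qed.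

Lemma normalmx_quadratic_of_eigenvalues (n : nat) (A : 'M[algC]_n) (a b : algC) :
  A \is normalmx -> (forall c, eigenvalue A c -> c = a \/ c = b) ->
  (A - a%:M) *m (A - b%:M) = 0.
Proof.
move=> /orthomx_spectralP; set P := spectralmx A; set d := spectral_diag A => A_diag ab.
have P_unit : P \in unitmx by apply: spectral_unit.
have PA : P *m A = diag_mx d *m P by rewrite {1}A_diag !mulmxA mulmxV // mul1mx.
have d_root i : (d 0 i - a) * (d 0 i - b) = 0.
  have : eigenvalue A (d 0 i).
    apply/eigenvalueP; exists (row i P).
      by rewrite -row_mul PA row_mul row_diag_mx -scalemxAl -rowE.
    apply/eqP => row0; have : row i (P *m invmx P) = 0 by rewrite row_mul row0 mul0mx.
    rewrite mulmxV // row1 => /matrixP /(_ 0 i).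
    by rewrite !mxE !eqxx => /eqP; rewrite oner_eq0.
  by case/ab => ->; rewrite subrr ?mulr0 ?mul0r.
have P_shift c : P *m (A - c%:M) = (diag_mx d - c%:M) *m P.
  by rewrite mulmxBr mulmxBl PA mul_mx_scalar mul_scalar_mx.
suff : P *m ((A - a%:M) *m (A - b%:M)) = 0.
  by move/(congr1 (mulmx (invmx P))); rewrite mulKmx // mulmx0.
rewrite mulmxA P_shift -mulmxA P_shift mulmxA !diag_mx_subC mulmx_diag.
suff -> : \row_j ((\row_k (d 0 k - a)) 0 j * (\row_k (d 0 k - b)) 0 j) = 0 :> 'rV_n.
  by rewrite raddf0 !mul0mx.
by apply/rowP => j; rewrite !mxE d_root.
Qed.

Lemma mulmx_sub_scalar_eq0_offdiag (n : nat) (A : 'M[algC]_n) (a b : algC) i j :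
  (A - a%:M) *m (A - b%:M) = 0 -> i != j ->
  \sum_k A i k * A k j = (a + b) * A i j.
Proof.
move=> /matrixP /(_ i j) quad ij; move: quad.
rewrite mulmxBl !mulmxBr mul_mx_scalar mul_scalar_mx -scalar_mxM !mxE (negbTE ij) mulr0n.
by move/eqP; rewrite subr0 subr_eq0 subr_eq => /eqP->; rewrite mulrDl.
Qed.

Lemma seidel_normalmx (v : nat) (e : rel 'I_v) :
  (forall x y, e x y = e y x) -> seidel e \is normalmx.
Proof.
move=> e_sym; apply/normalmxP.
suff -> : map_mx conjC (seidel e)^T = seidel e by [].
apply/matrixP => i j; rewrite !mxE eq_sym e_sym.
by case: (i == j); case: (e i j); rewrite ?rmorph0 ?rmorphN1 ?rmorph1.
Qed.

Definition seidel_sign (v : nat) (e : rel 'I_v) (i j : 'I_v) : int :=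
  if i == j then 0 else if e i j then -1 else 1.

Section SeidelSign.

Variables (v : nat) (e : rel 'I_v).
Hypothesis e_sym : forall x y, e x y = e y x.

Local Notation s := (seidel_sign e).

Lemma seidelE i j : seidel e i j = (s i j)%:~R.
Proof.
rewrite mxE /seidel_sign; case: (i == j); first by rewrite rmorph0.
by case: (e i j); rewrite ?rmorphN1 ?rmorph1.
Qed.

Lemma seidel_sign_diag i : s i i = 0.
Proof. by rewrite /seidel_sign eqxx. Qed.

Lemma seidel_sign_sym i j : s i j = s j i.
Proof. by rewrite /seidel_sign eq_sym e_sym. Qed.

Lemma seidel_sign_offdiag i j : i != j -> s i j = if e i j then -1 else 1.
Proof. by rewrite /seidel_sign => /negbTE->. Qed.

Lemma seidel_sign_pm i j : i != j -> s i j = 1 \/ s i j = -1.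
Proof. by move/seidel_sign_offdiag->; case: (e i j); auto. Qed.

Lemma seidel_sign_triple i j k : i != j -> j != k -> k != i ->
  s i j * s j k * s k i = if e i j (+) e j k (+) e k i then -1 else 1.
Proof.
move=> ij jk ki; rewrite !seidel_sign_offdiag //.
by case: (e i j); case: (e j k); case: (e k i); rewrite /= ?mulN1r ?mul1r ?opprK.
Qed.

Lemma seidel_sign_regular (a b : algC) :
  (forall c, eigenvalue (seidel e) c -> c = a \/ c = b) -> (1 < v)%N ->
  exists p : int, forall i j, i != j -> \sum_k s i k * s k j = p * s i j.
Proof.
move=> ab v_gt1.
have quad := normalmx_quadratic_of_eigenvalues (seidel_normalmx e_sym) ab.
have offdiag i j : i != j -> (\sum_k s i k * s k j)%:~R = (a + b) * (s i j)%:~R :> algC.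
  move=> ij; rewrite -seidelE -(mulmx_sub_scalar_eq0_offdiag quad ij) rmorph_sum.
  by apply: eq_bigr => k _; rewrite !seidelE rmorphM.
have [i0 [j0 [_ _ ij0]]] :
    exists i0 j0, [/\ i0 \in [set: 'I_v], j0 \in [set: 'I_v] & i0 != j0].
  by apply/card_gt1P; rewrite cardsT card_ord.
exists ((\sum_k s i0 k * s k j0) * s i0 j0) => i j ij; apply: (@intr_inj algC).
have sq1 : s i0 j0 * s i0 j0 = 1 by case: (seidel_sign_pm ij0) => ->.
by rewrite !intrM !offdiag // -(mulrA (a + b)) -intrM sq1 mulr1.
Qed.

End SeidelSign.

Lemma switch_xor (v : nat) (e : rel 'I_v) (U : {set 'I_v}) x y : x != y ->
  switch e U x y = e x y (+) (x \in U) (+) (y \in U).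
Proof. by rewrite /switch => ->; case: (x \in U); case: (y \in U); case: (e x y). Qed.

Lemma trivial_of_constant_triples (v : nat) (e : rel 'I_v) (c : bool) :
  (forall x y, e x y = e y x) ->
  (forall i j k, i != j -> j != k -> k != i -> e i j (+) e j k (+) e k i = c) ->
  trivial_switching_class e.
Proof.
case: v e => [|v] e e_sym triples; first by exists set0; right; case.
pose w : 'I_v.+1 := ord0.
(* Switching with respect to [U] makes every edge at [w] equal to [c]; by the
   constant parity of triples through [w], so does every other edge. *)
pose U := [set i | (i != w) && (e w i != c)].
have switch_c x y : x != y -> switch e U x y = c.
  move=> xy; rewrite switch_xor // !inE.
  have [xw|xw] := eqVneq x w; have [yw|yw] := eqVneq y w.
  - by rewrite xw yw eqxx in xy.
  - by rewrite xw /=; case: (e w y); case: (c).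
  - by rewrite yw e_sym /=; case: (e w x); case: (c).
  have := triples w x y; rewrite !(eq_sym w) xw yw (e_sym y w) => /(_ isT xy isT) <- /=.
  by case: (e w x); case: (e w y); case: (e x y).
exists U; move: switch_c; case: (c) => switch_c; [left | right] => x y.
  by move/switch_c.
have [->|/switch_c->] := eqVneq x y; last by [].
by rewrite /switch eqxx.
Qed.

Theorem proposition7 (v : nat) (e : rel 'I_v) :
  simple_graph e ->
  regular_two_graph e ->
  ~ trivial_switching_class e ->
  ~ bipartite e.
Proof.
move=> [e_sym _] [a [b [_ two_eigen]]] nontrivial [f f_bip]; apply: nontrivial.
have eigen_ab c : eigenvalue (seidel e) c -> c = a \/ c = b by move/two_eigen.
have [v_lt3|v_ge3] := ltnP v 3.
  apply: (@trivial_of_constant_triples _ _ false e_sym) => i j k ij jk ki.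
  have : (2 < #|'I_v|)%N by apply/card_gt2P; exists i, j, k.
  by rewrite card_ord ltnNge -ltnS v_lt3.
have [p regular] := seidel_sign_regular e_sym eigen_ab (ltnW v_ge3).
have same_side i j : i != j -> f i = f j -> seidel_sign e i j = 1.
  move=> ij fij; rewrite seidel_sign_offdiag //.
  by case: ifP => // /f_bip; rewrite fij eqxx.
have s_sym := seidel_sign_sym e_sym; have s_pm := @seidel_sign_pm _ e.
have [c c_sign p_ext] :=
  extremal_parameter (seidel_sign_diag e) s_sym s_pm regular same_side v_ge3.
have triples := triples_constant (seidel_sign_diag e) s_sym s_pm regular c_sign p_ext.
apply: (@trivial_of_constant_triples _ _ (c == -1) e_sym) => i j k ij jk ki.
move: (triples i j k ij jk ki); rewrite seidel_sign_triple //.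
by case: c_sign => ->; case: (_ (+) _).
Qed.
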